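(* Let $D\subset\mathbb{R}^N$ be a bounded domain or $D=\mathbb{R}^N$. Suppose $g(t,x)$ is bounded and uniformly continuous in $(t,x)\in\mathbb{R}\times\bar D$ with $g(t,x)>0$ for all $(t,x)\in\mathbb{R}\times D$, and $f$ satisfies (A-$f$) in the context. Then for any fixed $x\in\bar D$, the ordinary differential equation $$u_t=g(t,x)+u\,f(t,x,u)$$ has at most one strictly positive bounded entire solution $u^*(t)$ (i.e. a solution defined for all $t\in\mathbb{R}$ with $\inf_{t\in\mathbb{R}}u^*(t)>0$ and $\sup_{t\in\mathbb{R}}u^*(t)<\infty$).
   Context: Assumption (A-$f$) (for $f:\mathbb{R}\times\bar D\times\mathbb{R}\to\mathbb{R}$): $f$ is $C^1$ in $u$; $f$ and $f_u$ are uniformly continuous and bounded on $\mathbb{R}\times\bar D\times E$ for every bounded $E\subset\mathbb{R}$; $f$ is (Bohr) almost periodic in $t$ uniformly with respect to $x\in\bar D$ and $u$ in bounded sets; when $D=\mathbb{R}^N$, $f$ is also almost periodic in $x$ uniformly with respect to $t$ and $u$ in bounded sets; there is $U>0$ with $f(t,x,u)+1<0$ for all $(t,x)$ and $u\ge U$; and $\sup_{t\in\mathbb{R},x\in\bar D}f_u(t,x,u)<0$ for each $u\ge0$. *)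

From HB Require Import structures.
From mathcomp Require Import all_boot all_order all_algebra.
From mathcomp Require Import all_classical all_reals all_analysis.
Set Implicit Arguments. Unset Strict Implicit. Unset Printing Implicit Defensive.
Import Order.TTheory GRing.Theory Num.Theory.
Import numFieldNormedType.Exports.
Local Open Scope classical_set_scope.
Local Open Scope ring_scope.

Definition bounded_domain_or_whole {R : realType} {N : nat} (D : set 'rV[R]_N) :=
  (D !=set0 /\ open D /\ connected D /\ exists M : R, forall x, D x -> `|x| <= M)
  \/ D = setT.

Definition bounded_realset {R : realType} (E : set R) :=
  exists M : R, forall u, E u -> `|u| <= M.

Definition rel_dense_R {R : realType} (S : set R) :=
  exists l : R, 0 < l /\ forall a : R, exists tau, S tau /\ a <= tau <= a + l.

Definition rel_dense_RN {R : realType} {N : nat} (S : set 'rV[R]_N) :=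
  exists l : R, 0 < l /\ forall a : 'rV[R]_N, exists tau, S tau /\ `|tau - a| <= l.

Definition unif_cont3 {R : realType} {N : nat} (h : R -> 'rV[R]_N -> R -> R)
  (A : set 'rV[R]_N) (E : set R) :=
  forall e : R, 0 < e -> exists d : R, 0 < d /\
    forall t1 t2 x1 x2 u1 u2, A x1 -> A x2 -> E u1 -> E u2 ->
      `|t1 - t2| < d -> `|x1 - x2| < d -> `|u1 - u2| < d ->
      `|h t1 x1 u1 - h t2 x2 u2| < e.

Definition bounded3 {R : realType} {N : nat} (h : R -> 'rV[R]_N -> R -> R)
  (A : set 'rV[R]_N) (E : set R) :=
  exists M : R, forall t x u, A x -> E u -> `|h t x u| <= M.

Definition unif_cont2 {R : realType} {N : nat} (g : R -> 'rV[R]_N -> R)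
  (A : set 'rV[R]_N) :=
  forall e : R, 0 < e -> exists d : R, 0 < d /\
    forall t1 t2 x1 x2, A x1 -> A x2 ->
      `|t1 - t2| < d -> `|x1 - x2| < d -> `|g t1 x1 - g t2 x2| < e.

Definition bounded2 {R : realType} {N : nat} (g : R -> 'rV[R]_N -> R)
  (A : set 'rV[R]_N) :=
  exists M : R, forall t x, A x -> `|g t x| <= M.

Definition ap_in_t {R : realType} {N : nat} (h : R -> 'rV[R]_N -> R -> R)
  (A : set 'rV[R]_N) (E : set R) :=
  forall e : R, 0 < e -> rel_dense_R
    [set tau | forall t x u, A x -> E u -> `|h (t + tau) x u - h t x u| < e].

Definition ap_in_x {R : realType} {N : nat} (h : R -> 'rV[R]_N -> R -> R)
  (E : set R) :=
  forall e : R, 0 < e -> rel_dense_RN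
    [set tau | forall t x u, E u -> `|h t (x + tau) u - h t x u| < e].

Definition f_u {R : realType} {N : nat} (f : R -> 'rV[R]_N -> R -> R) :=
  fun t x u => derive1 (f t x) u.

Definition assumption_Af {R : realType} {N : nat} (D : set 'rV[R]_N)
  (f : R -> 'rV[R]_N -> R -> R) :=
  (forall t x, closure D x ->
     (forall u, derivable (f t x) u 1) /\ continuous (f_u f t x)) /\
  (forall E : set R, bounded_realset E ->
     unif_cont3 f (closure D) E /\ bounded3 f (closure D) E /\
     unif_cont3 (f_u f) (closure D) E /\ bounded3 (f_u f) (closure D) E) /\
  (forall E : set R, bounded_realset E -> ap_in_t f (closure D) E) /\
  (D = setT -> forall E : set R, bounded_realset E -> ap_in_x f E) /\
  (exists U : R, 0 < U /\
     forall t x u, closure D x -> U <= u -> f t x u + 1 < 0) /\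
  (forall u : R, 0 <= u -> exists delta : R, 0 < delta /\
     forall t x, closure D x -> f_u f t x u <= - delta).

Definition entire_solution {R : realType} {N : nat} (g : R -> 'rV[R]_N -> R)
  (f : R -> 'rV[R]_N -> R -> R) (x : 'rV[R]_N) (u : R -> R) :=
  forall t : R, derivable u t 1 /\ derive1 u t = g t x + u t * f t x (u t).

Definition strictly_positive_bounded {R : realType} (u : R -> R) :=
  (exists m : R, 0 < m /\ forall t, m <= u t) /\
  (exists M : R, forall t, u t <= M).

From HB Require Import structures.
From mathcomp Require Import all_boot all_order all_algebra.
From mathcomp Require Import all_classical all_reals all_analysis.
From mathcomp Require Import ring lra.
Import Order.TTheory GRing.Theory Num.Theory.
Import numFieldNormedType.Exports.
Local Open Scope classical_set_scope.
Local Open Scope ring_scope.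

(* Fix x and write the equation as u' = G(t) + u F(t, u), where G >= 0 and
   F(t, .) is decreasing with d_u F <= -delta(u) < 0 uniformly in t.  If v, w
   are positive bounded solutions with v(t0) > w(t0), the ratio r = v / w
   satisfies r' = (G / w)(1 - r) + r (F(v) - F(w)), which is negative wherever
   r > 1.  Hence r >= r(t0) > 1 on (-oo, t0], so v - w stays bounded away from 0
   there; the uniform decrease of F on the compact range of w then gives
   r' <= -eta on (-oo, t0], and r grows linearly backwards in time, which
   contradicts the bounds on v and w. *)

Lemma unif_cont2_closure_ge0 {R : realType} {N : nat} {D : set 'rV[R]_N}
    {g : R -> 'rV[R]_N -> R} :
  unif_cont2 g (closure D) -> (forall t x, D x -> 0 < g t x) ->
  forall t x, closure D x -> 0 <= g t x.
Proof.
move=> gc gpos t x Dx; rewrite leNgt; apply/negP => gx_lt0.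
have [d [d0 Hd]] := gc (- g t x) (ltac:(by rewrite oppr_gt0)).
have [y [Dy xy]] := Dx (ball x d) (nbhsx_ballx x d d0).
move: xy; rewrite -ball_normE /= => xy.
have /ltr_normlP[+ _] := Hd t t x y Dx (subset_closure Dy)
  (ltac:(by rewrite subrr normr0)) xy.
have := gpos t y Dy; lra.
Qed.

Lemma derive1_lt0_left (R : realType) (f : R -> R) (a c : R) :
  derivable f c 1 -> f^`()%classic c < 0 -> a < c ->
  exists2 t, a < t < c & f c < f t.
Proof.
move=> df; rewrite derive1E => dfc_lt0 ac.
have : (fun h : R => h^-1 *: (f (h *: 1 + c) - f c)) @ 0^' --> 'D_1 f c := df.
move=> /cvgr_lt /(_ _ dfc_lt0); rewrite near_withinE.
move=> /nbhs_ballP[e /= e0 He].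
pose h := - (Order.min e (c - a) / 2).
have m0 : 0 < Order.min e (c - a) by rewrite lt_min e0 subr_gt0.
have me : Order.min e (c - a) <= e by rewrite ge_min lexx.
have mca : Order.min e (c - a) <= c - a by rewrite ge_min lexx orbT.
have h_lt0 : h < 0 by rewrite oppr_lt0 divr_gt0.
have hb : ball (0 : R) e h.
  by rewrite -ball_normE /= sub0r opprK ger0_norm ?divr_ge0 ?ltW //; lra.
have := He h hb (ltr0_neq0 h_lt0); rewrite /= -[h%:A]/(h * 1) mulr1 -[_ *: _]/(_ * _).
rewrite nmulr_rlt0 ?invr_lt0 // subr_gt0 => fc_lt.
by exists (h + c) => //; rewrite /h; apply/andP; split; lra.
Qed.

Section BackwardComparison.
Context {R : realType} {phi : R -> R}.
Hypothesis phi_derivable : forall s, derivable phi s 1.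

Lemma backward_barrier (c t0 : R) :
  (forall s, c < phi s -> phi^`()%classic s < 0) -> c < phi t0 ->
  forall s, s <= t0 -> phi t0 <= phi s.
Proof.
move=> dphi_lt0 c_t0 s; rewrite le_eqVlt => /predU1P[-> //|s_t0].
rewrite leNgt; apply/negP => phi_s_lt.
have [p p_in p_max] := EVT_max (ltW s_t0)
  (derivable_within_continuous (fun u _ => phi_derivable u)).
have t0_in : t0 \in `[s, t0] by rewrite in_itv /= lexx ltW.
have c_p : c < phi p := lt_le_trans c_t0 (p_max t0 t0_in).
move: p_in; rewrite in_itv /= => /andP[]; rewrite le_eqVlt => /predU1P[sp|s_p].
  by have := p_max t0 t0_in; rewrite -sp; lra.
rewrite le_eqVlt => /predU1P[pt0|p_t0].
  have [t /andP[s_t t_t0]] := @derive1_lt0_left _ phi s t0 (phi_derivable t0)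
    (ltac:(by rewrite -pt0 dphi_lt0)) s_t0.
  move: p_max; rewrite pt0 => /(_ t).
  by rewrite in_itv /= (ltW s_t) (ltW t_t0) => /(_ isT); lra.
have p_in : p \in `]s, t0[ by rewrite in_itv /= s_p p_t0.
have dphi_p0 : phi^`()%classic p = 0.
  rewrite derive1E; apply: derive_val.
  exact: derive1_at_max (ltW s_t0) (fun u _ => phi_derivable u) p_in
    (fun u u_in => p_max u (subset_itv_oo_cc u_in)).
by have := dphi_lt0 p c_p; rewrite dphi_p0 ltxx.
Qed.

Lemma backward_linear_growth (eta t0 : R) :
  (forall s, s <= t0 -> phi^`()%classic s <= - eta) ->
  forall s, s <= t0 -> phi t0 + eta * (t0 - s) <= phi s.
Proof.
move=> dphi_le s; rewrite le_eqVlt => /predU1P[->|s_t0].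
  by rewrite subrr mulr0 addr0.
have [c] := MVT s_t0 (fun u _ => derivableP (phi_derivable u))
  (derivable_within_continuous (fun u _ => phi_derivable u)).
rewrite in_itv /= => /andP[_ /ltW c_t0] phi_diff.
have : phi t0 - phi s <= - eta * (t0 - s).
  by rewrite phi_diff ler_wpM2r -?derive1E ?dphi_le // subr_ge0 ltW.
rewrite mulNr; lra.
Qed.
End BackwardComparison.

Section DecreasingNonlinearity.
Context {R : realType} {F : R -> R -> R}.
Hypothesis F_derivable : forall t u, derivable (F t) u 1.
Hypothesis dF_lt0 : forall u, 0 <= u ->
  exists delta, 0 < delta /\ forall t, (F t)^`()%classic u <= - delta.
Hypothesis dF_unif_cont : forall K e, 0 < e -> exists d, 0 < d /\
  forall t u1 u2, `|u1| <= K -> `|u2| <= K -> `|u1 - u2| < d ->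
    `|(F t)^`()%classic u1 - (F t)^`()%classic u2| < e.

Lemma F_decr t a b : 0 <= a -> a < b -> F t b < F t a.
Proof.
move=> a_ge0 ab.
apply: (@ltr0_derive1_lt_cc _ (F t) a b) => [u _|||||]; first exact: F_derivable.
- move=> u; rewrite in_itv /= => /andP[au _].
  have [delta [delta0 dF_le]] := dF_lt0 u (ltW (le_lt_trans a_ge0 au)).
  by have := dF_le t; lra.
- exact: derivable_within_continuous.
- by rewrite in_itv /= lexx ltW.
- by rewrite in_itv /= lexx ltW.
- done.
Qed.

Lemma F_nincr t a b : 0 <= a -> a <= b -> F t b <= F t a.
Proof.
by move=> a_ge0; rewrite le_eqVlt => /predU1P[-> //|ab]; exact/ltW/F_decr.
Qed.

Lemma F_gap_pair q1 q2 : 0 <= q1 -> q1 < q2 ->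
  exists2 eta, 0 < eta & forall t, F t q2 <= F t q1 - eta.
Proof.
move=> q1_ge0 q12.
have [delta [delta0 dF_q1]] := dF_lt0 q1 q1_ge0.
(* uniform continuity of d_u F keeps it below -delta/2 on [q1, q1 + s] for every t *)
have [d [d0 dF_near]] := dF_unif_cont q2 (delta / 2) (ltac:(by rewrite divr_gt0)).
pose s := Order.min (d / 2) (q2 - q1).
have s0 : 0 < s by rewrite lt_min subr_gt0 q12 divr_gt0.
have s_d : s <= d / 2 by rewrite ge_min lexx.
have s_q : s <= q2 - q1 by rewrite ge_min lexx orbT.
exists (delta / 2 * s) => [|t]; first by rewrite mulr_gt0 ?divr_gt0.
have [c] := MVT (ltac:(lra) : q1 < q1 + s) (fun u _ => derivableP (F_derivable t u))
  (derivable_within_continuous (fun u _ => F_derivable t u)).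
rewrite in_itv /= => /andP[q1_c c_q1s] F_diff.
have dF_c : (F t)^`()%classic c <= - (delta / 2).
  have := dF_q1 t; have /ltr_normlP[_] := dF_near t c q1
    (ltac:(rewrite ger0_norm; lra)) (ltac:(rewrite ger0_norm; lra))
    (ltac:(rewrite ger0_norm; lra)).
  lra.
have : F t (q1 + s) - F t q1 <= - (delta / 2) * s.
  by rewrite F_diff addrAC subrr add0r ler_wpM2r ?(ltW s0) -?derive1E.
have : F t q2 <= F t (q1 + s) by apply: F_nincr; lra.
rewrite mulNr; lra.
Qed.

Lemma F_gap_grid m k n : 0 <= m -> 0 < k ->
  exists2 eta, 0 < eta & forall t a b,
    m <= b < m + n%:R * k -> b + 2 * k <= a -> F t a <= F t b - eta.
Proof.
move=> m_ge0 k0; elim: n => [|n [eta eta0 gap_n]].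
  by exists 1 => // t a b; rewrite mul0r addr0; lra.
pose q i := m + i%:R * k.
have q_ge0 i : 0 <= q i by rewrite addr_ge0 // mulr_ge0 // ltW.
have qS i : q i.+1 = q i + k by rewrite /q -addn1 natrD mulrDl mul1r addrA.
have [eta' eta'0 gap'] :=
  F_gap_pair (q n.+1) (q n.+2) (q_ge0 _) (ltac:(rewrite (qS n.+1); lra)).
exists (Order.min eta eta') => [|t a b /andP[m_b b_lt] ba].
  by rewrite lt_min eta0 eta'0.
have eta_le : Order.min eta eta' <= eta by rewrite ge_min lexx.
have eta'_le : Order.min eta eta' <= eta' by rewrite ge_min lexx orbT.
have [b_lt_n|b_ge_n] := ltP b (q n).
  by have := gap_n t a b (ltac:(by rewrite m_b)) ba; lra.
move: b_lt; rewrite -/(q n.+1) qS => b_lt.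
have := q_ge0 n; have := gap' t; rewrite !qS.
have : F t a <= F t (q n + k + k) by apply: F_nincr; lra.
have : F t (q n + k) <= F t b by apply: F_nincr; lra.
lra.
Qed.

Lemma F_unif_gap m M h : 0 <= m -> 0 < h ->
  exists2 eta, 0 < eta & forall t a b,
    m <= b <= M -> b + h <= a -> F t a <= F t b - eta.
Proof.
move=> m_ge0 h0; have h2_gt0 : 0 < h / 2 by rewrite divr_gt0.
pose n := Num.Def.archi_bound `|(M - m) / (h / 2)|.
have M_lt : M < m + n%:R * (h / 2).
  have := archi_boundP (normr_ge0 ((M - m) / (h / 2))).
  move/(le_lt_trans (ler_norm _)); rewrite ltr_pdivrMr //; lra.
have [eta eta0 gap] := F_gap_grid m (h / 2) n m_ge0 h2_gt0.
by exists eta => // t a b /andP[m_b b_M] ba; apply: gap; [rewrite m_b|]; lra.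
Qed.

Section ScalarODE.
Context {G : R -> R}.
Hypothesis G_ge0 : forall t, 0 <= G t.

Definition is_solution (u : R -> R) :=
  forall t, derivable u t 1 /\ u^`()%classic t = G t + u t * F t (u t).

Lemma is_derive_ratio v w t : is_solution v -> is_solution w -> w t != 0 ->
  is_derive t 1 (fun s => v s / w s)
    (G t / w t * (1 - v t / w t) + v t / w t * (F t (v t) - F t (w t))).
Proof.
move=> v_sol w_sol w_neq0.
have derive_sol u : is_solution u -> is_derive t 1 u (G t + u t * F t (u t)).
  by move=> /(_ t)[du <-]; rewrite derive1E; exact: derivableP.
apply: is_derive_eq.
  exact: is_deriveM (derive_sol v v_sol) (is_deriveV w_neq0 (derive_sol w w_sol)).
by rewrite /GRing.scale /=; field.
Qed.

Section Ratio.
Context {v w : R -> R}.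
Hypotheses (v_sol : is_solution v) (w_sol : is_solution w).
Hypothesis w_gt0 : forall s, 0 < w s.

Let r s := v s / w s.

Lemma ratio_derivable s : derivable r s 1.
Proof. by case: (is_derive_ratio v w s v_sol w_sol (lt0r_neq0 (w_gt0 s))). Qed.

Lemma derive1_ratio s :
  r^`()%classic s = G s / w s * (1 - r s) + r s * (F s (v s) - F s (w s)).
Proof.
rewrite derive1E; apply: derive_val.
exact: is_derive_ratio v w s v_sol w_sol (lt0r_neq0 (w_gt0 s)).
Qed.

Lemma derive1_ratio_le s : 1 <= r s ->
  r^`()%classic s <= r s * (F s (v s) - F s (w s)).
Proof.
move=> r_ge1; rewrite derive1_ratio gerDr mulr_ge0_le0 ?subr_le0 //.
by rewrite divr_ge0 ?G_ge0 ?ltW.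
Qed.

Lemma derive1_ratio_lt0 s : 1 < r s -> r^`()%classic s < 0.
Proof.
move=> r_gt1; apply: le_lt_trans (derive1_ratio_le s (ltW r_gt1)) _.
rewrite pmulr_rlt0 ?subr_lt0 ?(lt_trans ltr01) //.
by apply: F_decr; [exact: ltW | rewrite -[w s]mul1r -ltr_pdivlMr].
Qed.

Lemma derive1_ratio_le_gap s eta : 1 <= r s -> 0 <= eta ->
  F s (v s) <= F s (w s) - eta -> r^`()%classic s <= - eta.
Proof.
move=> r_ge1 eta_ge0 F_gap; apply: le_trans (derive1_ratio_le s r_ge1) _.
apply: le_trans (_ : r s * - eta <= _).
  by rewrite ler_pM2l ?(lt_le_trans ltr01) //; lra.
by rewrite mulrN lerN2 ler_peMl.
Qed.

End Ratio.

Lemma solution_le v w : is_solution v -> strictly_positive_bounded v ->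
  is_solution w -> strictly_positive_bounded w -> forall t, v t <= w t.
Proof.
move=> v_sol [[mv [mv0 v_ge]] [Mv v_le]] w_sol [[m [m0 w_ge]] [Mw w_le]] t0.
rewrite leNgt; apply/negP => w_lt_v.
have w_gt0 s : 0 < w s := lt_le_trans m0 (w_ge s).
have Mv_ge0 : 0 <= Mv := le_trans (ltW (lt_le_trans mv0 (v_ge 0))) (v_le 0).
pose r s := v s / w s.
have r_derivable := ratio_derivable v_sol w_sol w_gt0.
pose rho := r t0.
have rho_gt1 : 1 < rho by rewrite /rho /r ltr_pdivlMr // mul1r.
have r_ge_rho : forall s, s <= t0 -> rho <= r s := backward_barrier r_derivable
  1 t0 (derive1_ratio_lt0 v_sol w_sol w_gt0) rho_gt1.
have [eta eta0 F_gap] := F_unif_gap m Mw ((rho - 1) * m) (ltW m0)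
  (ltac:(by rewrite mulr_gt0 // subr_gt0)).
have dr_le s : s <= t0 -> r^`()%classic s <= - eta.
  move=> s_t0; have rho_r := r_ge_rho s s_t0.
  have gap_s : w s + (rho - 1) * m <= v s.
    have : (rho - 1) * m <= (r s - 1) * w s by apply: ler_pM; rewrite ?w_ge //; lra.
    by rewrite [(_ - 1) * w s]mulrBl mul1r /r /= divfK ?lt0r_neq0 //; lra.
  have r_ge1 : 1 <= r s by lra.
  apply: (derive1_ratio_le_gap v_sol w_sol w_gt0 s eta r_ge1 (ltW eta0)).
  by apply: F_gap; rewrite ?w_ge ?w_le.
have r_le s : r s <= Mv / m.
  rewrite /r ler_pdivrMr // (le_trans (v_le s)) //.
  by rewrite -{1}(divfK (lt0r_neq0 m0) Mv) ler_wpM2l ?divr_ge0 ?w_ge ?(ltW m0).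
pose T := Mv / m / eta.
have eta_T : eta * T = Mv / m by rewrite /T mulrC divfK ?gt_eqF.
have T_ge0 : 0 <= T by rewrite !divr_ge0 ?(ltW m0) ?(ltW eta0).
have := backward_linear_growth r_derivable eta t0 dr_le (t0 - T) (ltac:(lra)).
rewrite subKr eta_T; have := r_le (t0 - T); move: rho_gt1; rewrite /rho /r; lra.
Qed.

End ScalarODE.
End DecreasingNonlinearity.

Theorem lemma3p1 (R : realType) (N : nat) (D : set 'rV[R]_N)
  (g : R -> 'rV[R]_N -> R) (f : R -> 'rV[R]_N -> R -> R) :
  (0 < N)%N ->
  bounded_domain_or_whole D ->
  unif_cont2 g (closure D) -> bounded2 g (closure D) ->
  (forall t x, D x -> 0 < g t x) ->
  assumption_Af D f ->
  forall x : 'rV[R]_N, closure D x ->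
  forall u1 u2 : R -> R,
    entire_solution g f x u1 -> strictly_positive_bounded u1 ->
    entire_solution g f x u2 -> strictly_positive_bounded u2 ->
    u1 = u2.
Proof.
move=> _ _ g_uc _ g_pos [f_C1 [f_bnd [_ [_ [_ fu_lt0]]]]] x Dx u1 u2.
have F_derivable t u : derivable (f t x) u 1 := (f_C1 t x Dx).1 u.
have dF_lt0 u : 0 <= u ->
    exists delta, 0 < delta /\ forall t, (f t x)^`()%classic u <= - delta.
  by move=> /fu_lt0[delta [delta0 fu_le]]; exists delta; split => // t; exact: fu_le.
have dF_unif_cont K e : 0 < e -> exists d, 0 < d /\
    forall t a b, `|a| <= K -> `|b| <= K -> `|a - b| < d ->
      `|(f t x)^`()%classic a - (f t x)^`()%classic b| < e.
  have [_ [_ [fu_uc _]]] := f_bnd [set u | `|u| <= K] (ex_intro _ K (fun _ uK => uK)).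
  move=> /fu_uc[d [d0 fu_near]].
  by exists d; split => // t a b aK bK ab; apply: fu_near; rewrite ?subrr ?normr0.
have G_ge0 t : 0 <= g t x := unif_cont2_closure_ge0 g_uc g_pos t x Dx.
move=> u1_sol u1_pb u2_sol u2_pb; apply/funext => t; apply/eqP; rewrite eq_le.
by rewrite !(solution_le F_derivable dF_lt0 dF_unif_cont G_ge0).
Qed.
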